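(* Let $\theta>0$, $\alpha>0$ and $x\in(0,1)\setminus\mathbb{Q}$. Suppose there exist a constant $C>0$ and a real polynomial $P$ of degree less than $\alpha$ such that $|f_\theta(x+h)-P(h)|\le C|h|^\alpha$ for all $h$ in a neighborhood of $0$. Then $P$ is the zero polynomial.
   Context: For $\theta>0$, the generalized Thomae function $f_\theta:\mathbb{R}\to\mathbb{R}$ is defined by $f_\theta(0)=1$, $f_\theta(x)=q^{-\theta}$ if $x$ is rational written as $x=p/q$ with $p\in\mathbb{Z}$, $q\in\mathbb{N}$ and $\gcd(p,q)=1$, and $f_\theta(x)=0$ if $x$ is irrational. *)

From Stdlib Require Import Reals Lra ZArith Znumtheory ClassicalEpsilon List.
Open Scope R_scope.

Definition lowest_denom (x : R) (q : nat) : Prop :=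
  (0 < q)%nat /\ exists p : Z, Z.gcd p (Z.of_nat q) = 1%Z /\ x = IZR p / INR q.

(* The denominator in lowest terms (chosen by Hilbert epsilon; it is unique
   when x is rational; the value is irrelevant when x is irrational). *)
Definition denom (x : R) : nat :=
  epsilon (inhabits 1%nat) (lowest_denom x).

(* Generalized Thomae function f_theta. Note f_theta(0) = 1 = 1^{-theta},
   since 0 = 0/1 in lowest terms. *)
Definition thomae (theta x : R) : R :=
  if excluded_middle_informative (exists q, lowest_denom x q)
  then Rpower (INR (denom x)) (- theta)
  else 0.

Fixpoint poly_eval (c : list R) (h : R) : R :=
  match c with
  | nil => 0
  | a :: c' => a + h * poly_eval c' h
  end.

(* |h|^a for a > 0, with the correct value 0 at h = 0
   (Stdlib's Rpower 0 a is exp(a * ln 0) = 1, which is wrong here). *)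
Definition abs_pow (h a : R) : R :=
  if Req_EM_T h 0 then 0 else Rpower (Rabs h) a.

From Stdlib Require Import Reals List Lra Lia.
From Coquelicot Require Import Coquelicot.
Open Scope R_scope.

(* Along the rational points [h = 1/n] the point [x + h] is irrational, so
   [f_theta (x + h) = 0] and the hypothesis reads [|P(1/n)| <= C (1/n)^alpha].
   If [c_0 = ... = c_(k-1) = 0] and [k < alpha], then [P(h) = h^k Q(h)] with
   [Q(0) = c_k], and dividing by [h^k] gives [|Q(1/n)| <= C (1/n)^(alpha - k)];
   letting [n -> oo] yields [|c_k| <= 0].  Coefficients of index [>= alpha]
   vanish by the degree assumption. *)

Definition irrational (x : R) : Prop :=
  ~ exists (p : Z) (q : nat), (0 < q)%nat /\ x = IZR p / INR q.

Lemma irrational_add_inv_INR (x : R) (n : nat) :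
  (0 < n)%nat -> irrational x -> irrational (x + / INR n).
Proof.
  intros Hn Hx [p [q [Hq E]]]. apply Hx.
  exists (p * Z.of_nat n - Z.of_nat q)%Z, (q * n)%nat. split; [lia|].
  assert (0 < INR n) by (apply lt_0_INR; lia).
  assert (0 < INR q) by (apply lt_0_INR; lia).
  rewrite mult_INR, minus_IZR, mult_IZR, <- !INR_IZR_INZ.
  replace x with (IZR p / INR q - / INR n) by lra.
  field. lra.
Qed.

Lemma thomae_irrational (theta x : R) : irrational x -> thomae theta x = 0.
Proof.
  intros Hx. unfold thomae.
  destruct (ClassicalEpsilon.excluded_middle_informative _) as [[q [Hq [p [_ E]]]] | _]; [|reflexivity].
  exfalso. apply Hx. now exists p, q.
Qed.

Lemma abs_pow_pos (h a : R) : 0 < h -> abs_pow h a = Rpower h a.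
Proof.
  intros Hh. unfold abs_pow.
  destruct (Req_EM_T h 0); [lra|]. now rewrite Rabs_pos_eq by lra.
Qed.

Lemma poly_eval_0 (c : list R) : poly_eval c 0 = nth 0 c 0.
Proof. destruct c; simpl; ring. Qed.

Lemma continuity_poly_eval (c : list R) : continuity (poly_eval c).
Proof.
  induction c as [|a c IH]; simpl.
  - apply continuity_const. now intros u v.
  - change (continuity ((fun _ => a) + (id * poly_eval c))%F).
    apply continuity_plus; [apply continuity_const; now intros u v|].
    apply continuity_mult; [apply derivable_continuous, derivable_id|exact IH].
Qed.

Lemma poly_eval_skipn (k : nat) (c : list R) (h : R) :
  (forall j, (j < k)%nat -> nth j c 0 = 0) ->
  poly_eval c h = h ^ k * poly_eval (skipn k c) h.
Proof.
  revert c. induction k as [|k IH]; intros c Hc; simpl; [ring|].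
  destruct c as [|a c]; simpl; [ring|].
  rewrite (IH c) by (intros j Hj; apply (Hc (S j)); lia).
  replace a with 0 by (symmetry; apply (Hc 0%nat); lia). ring.
Qed.

Lemma is_lim_seq_inv_INR : is_lim_seq (fun n => / INR n) 0.
Proof. exact (is_lim_seq_inv _ _ is_lim_seq_INR ltac:(discriminate)). Qed.

Lemma is_lim_seq_Rpower_inv_INR (b : R) :
  0 < b -> is_lim_seq (fun n => Rpower (/ INR n) b) 0.
Proof.
  intros Hb.
  assert (Hln : is_lim_seq (fun n => ln (INR n)) p_infty)
    by exact (filterlim_comp _ _ _ INR ln _ _ _ is_lim_seq_INR is_lim_ln_p).
  assert (Hexponent : is_lim_seq (fun n => - b * ln (INR n)) m_infty).
  { apply (is_lim_seq_scal_l _ (- b)) in Hln. simpl in Hln.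
    destruct (Rle_dec 0 (- b)); [lra|]. exact Hln. }
  apply (is_lim_seq_ext_loc (fun n => exp (- b * ln (INR n)))).
  - exists 1%nat. intros n Hn. unfold Rpower.
    rewrite ln_Rinv by (apply lt_0_INR; lia). f_equal. ring.
  - exact (filterlim_comp _ _ _ _ exp _ _ _ Hexponent is_lim_exp_m).
Qed.

Lemma poly_coeff_eq0_of_bound_inv_INR (c : list R) (C alpha : R) :
  eventually (fun n => Rabs (poly_eval c (/ INR n)) <= C * Rpower (/ INR n) alpha) ->
  forall k, INR k < alpha -> nth k c 0 = 0.
Proof.
  intros Hbound k. induction k as [k IH] using Wf_nat.lt_wf_ind. intros Hk.
  assert (Hlow : forall j, (j < k)%nat -> nth j c 0 = 0).
  { intros j Hj. apply IH; [exact Hj|]. apply lt_INR in Hj. lra. }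
  set (Q := poly_eval (skipn k c)).
  set (b := alpha - INR k).
  assert (HQbound : eventually (fun n => Rabs (Q (/ INR n)) <= C * Rpower (/ INR n) b)).
  { assert (Hpos : eventually (fun n => (0 < n)%nat)) by (exists 1%nat; lia).
    generalize (filter_and _ _ Hbound Hpos). apply filter_imp. intros n [Hn Hn0].
    assert (Hh : 0 < / INR n) by (apply Rinv_0_lt_compat, lt_0_INR; lia).
    assert (Hhk : 0 < (/ INR n) ^ k) by (apply pow_lt; exact Hh).
    rewrite (poly_eval_skipn k c _ Hlow), Rabs_mult, Rabs_pos_eq in Hn by lra.
    replace alpha with (INR k + b) in Hn by (unfold b; ring).
    rewrite Rpower_plus, Rpower_pow in Hn by exact Hh.
    apply (Rmult_le_reg_l ((/ INR n) ^ k)); [exact Hhk|]. fold Q in Hn. lra. }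
  assert (HQlim : is_lim_seq (fun n => Rabs (Q (/ INR n))) (Rabs (nth k c 0))).
  { replace (nth k c 0) with (Q 0)
      by (unfold Q; rewrite poly_eval_0, nth_skipn; f_equal; lia).
    apply (is_lim_seq_abs _ (Q 0)), is_lim_seq_continuous;
      [apply continuity_poly_eval | exact is_lim_seq_inv_INR]. }
  assert (Hbound_lim : is_lim_seq (fun n => C * Rpower (/ INR n) b) 0).
  { replace (Finite 0) with (Rbar_mult C 0) by (simpl; f_equal; ring).
    apply is_lim_seq_scal_l, is_lim_seq_Rpower_inv_INR. unfold b. lra. }
  pose proof (is_lim_seq_le_loc _ _ _ _ HQbound HQlim Hbound_lim) as Hle. simpl in Hle.
  pose proof (Rabs_pos (nth k c 0)).
  apply Rabs_eq_0. lra.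
Qed.

Theorem mainTheorem2 (theta alpha x : R) (c : list R)
  (Htheta : 0 < theta) (Halpha : 0 < alpha)
  (Hx0 : 0 < x) (Hx1 : x < 1)
  (Hirr : ~ exists (p : Z) (q : nat), (0 < q)%nat /\ x = IZR p / INR q)
  (Hdeg : forall i : nat, alpha <= INR i -> nth i c 0 = 0)
  (Happrox : exists C delta : R, 0 < C /\ 0 < delta /\
     forall h : R, Rabs h < delta ->
       Rabs (thomae theta (x + h) - poly_eval c h) <= C * abs_pow h alpha) :
  forall i : nat, nth i c 0 = 0.
Proof.
  intros i. destruct (Rle_lt_dec alpha (INR i)) as [Hi | Hi]; [now apply Hdeg|].
  destruct Happrox as (C & delta & _ & Hdelta & Happrox).
  apply (poly_coeff_eq0_of_bound_inv_INR c C alpha); [|exact Hi].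
  assert (Hsmall : eventually (fun n => Rabs (/ INR n - 0) < delta))
    by exact (proj2 (is_lim_seq_spec _ _) is_lim_seq_inv_INR (mkposreal _ Hdelta)).
  assert (Hpos : eventually (fun n => (0 < n)%nat)) by (exists 1%nat; lia).
  generalize (filter_and _ _ Hsmall Hpos). apply filter_imp. intros n [Hn Hn0].
  rewrite Rminus_0_r in Hn.
  assert (Hh : 0 < / INR n) by (apply Rinv_0_lt_compat, lt_0_INR; lia).
  specialize (Happrox _ Hn).
  rewrite thomae_irrational in Happrox by now apply irrational_add_inv_INR.
  rewrite abs_pow_pos, Rminus_0_l, Rabs_Ropp in Happrox by exact Hh.
  exact Happrox.
Qed.
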